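(* Let $\mathcal X\subseteq\{0,1\}^n$, $\hat{\pmb c},\pmb d\in\mathbb R^n_{\ge0}$ and let $\Gamma\in\{0,\dots,n\}$. Then any optimal solution of the nominal problem $\min_{\pmb x\in\mathcal X}(\hat{\pmb c}+\pmb d)^t\pmb x$ is also an optimal solution of the balanced regret problem \[\min_{\pmb x\in\mathcal X}\ \max_{\pmb\delta\in\Delta(\Gamma),\,\pmb y\in\mathcal X}\ \min_{\pmb\epsilon\in\Delta(\Gamma')}\ \sum_{i\in[n]}(\hat c_i+d_i\delta_i+d_i\epsilon_i)(x_i-y_i)\] with $\Gamma'=n$.
   Context: $[n]=\{1,\dots,n\}$; for an integer $k\ge0$, $\Delta(k)=\{\pmb\delta\in\{0,1\}^n:\sum_i\delta_i\le k\}$. $\mathcal X$ is the (nonempty) set of feasible solutions of a combinatorial optimization problem, described as the intersection of a polyhedron with $\{0,1\}^n$. *)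

From mathcomp Require Import all_boot all_order all_algebra.
Set Implicit Arguments. Unset Strict Implicit. Unset Printing Implicit Defensive.
Import Order.TTheory GRing.Theory Num.Theory.
Local Open Scope ring_scope.

Notation bvec n := {ffun 'I_n -> bool}.

Definition bzero (n : nat) : bvec n := [ffun _ => false].

Definition Delta (n k : nat) : {set bvec n} :=
  [set dl : bvec n | (\sum_(i < n) (dl i : nat) <= k)%N].

Definition nominal (R : ringType) (n : nat) (c d : 'I_n -> R) (x : bvec n) : R :=
  \sum_(i < n) (c i + d i) * (x i : nat)%:R.

Definition regret_term (R : ringType) (n : nat) (c d : 'I_n -> R)
    (x dl y eps : bvec n) : R :=
  \sum_(i < n) (c i + d i * (dl i : nat)%:R + d i * (eps i : nat)%:R)
                 * ((x i : nat)%:R - (y i : nat)%:R).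

(* min over eps in Delta(Gamma'); the fold's default value is the term at
   eps = 0, which lies in Delta(Gamma'), so this is the true minimum. *)
Definition inner_min (R : realDomainType) (n : nat) (c d : 'I_n -> R)
    (Gamma' : nat) (x dl y : bvec n) : R :=
  \big[Num.min/regret_term c d x dl y (bzero n)]_(eps in Delta n Gamma')
      regret_term c d x dl y eps.

(* The fold's default
   value is the value at (delta, y) = (0, x), which lies in the range whenever
   x \in X, so for x \in X this is the true maximum. *)
Definition balanced_regret (R : realDomainType) (n : nat) (c d : 'I_n -> R)
    (X : {set bvec n}) (Gamma Gamma' : nat) (x : bvec n) : R :=
  \big[Num.max/inner_min c d Gamma' x (bzero n) x]_(p in setX (Delta n Gamma) X)
      inner_min c d Gamma' x p.1 p.2.

From mathcomp Require Import all_boot all_order all_algebra.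
From mathcomp Require Import lra.
Import Order.TTheory GRing.Theory Num.Theory.
Local Open Scope ring_scope.

(** The balanced regret of any [x] is at least [0], witnessed by [y = x].
    Conversely, against a fixed [y] the minimising player may pick [eps] as
    the indicator of the items chosen by [y] but not by [x]; this turns the
    regret term into at most [(c + d)^t x - (c + d)^t y], which is [<= 0]
    when [x] is nominally optimal.  So a nominal optimum has balanced regret
    exactly [0], the least possible value. *)

Definition bvec_diff {n : nat} (y x : bvec n) : bvec n :=
  [ffun i => y i && ~~ x i].

Lemma Delta_full {n : nat} (e : bvec n) : e \in Delta n n.
Proof.
rewrite inE -[X in (_ <= X)%N]card_ord -sum1_card.
by apply: leq_sum => i _; apply: leq_b1.
Qed.

Section RegretTerm.

Variables (R : realDomainType) (n : nat) (c d : 'I_n -> R).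

Lemma regret_term_id (z dl eps : bvec n) : regret_term c d z dl z eps = 0.
Proof. by rewrite /regret_term big1 // => i _; rewrite subrr mulr0. Qed.

Lemma inner_min_id (Gamma' : nat) (z dl : bvec n) :
  inner_min c d Gamma' z dl z = 0.
Proof.
rewrite /inner_min; elim/big_ind: _ => [||eps _]; rewrite ?regret_term_id //.
by move=> a b -> ->; rewrite minxx.
Qed.

Lemma balanced_regret_ge0 (X : {set bvec n}) (Gamma Gamma' : nat) (x : bvec n) :
  0 <= balanced_regret c d X Gamma Gamma' x.
Proof. by rewrite -(inner_min_id Gamma' x (bzero n)); apply: bigmax_ge_id. Qed.

Hypothesis d_ge0 : forall i, 0 <= d i.

Lemma regret_term_diff_le (x dl y : bvec n) :
  regret_term c d x dl y (bvec_diff y x) <= nominal c d x - nominal c d y.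
Proof.
rewrite /regret_term /nominal -sumrB; apply: ler_sum => i _.
rewrite ffunE -mulrBr; have := d_ge0 i.
by case: (x i); case: (y i); case: (dl i) => /= ?; lra.
Qed.

Lemma inner_min_le_nominal_diff (x dl y : bvec n) :
  inner_min c d n x dl y <= nominal c d x - nominal c d y.
Proof.
exact: bigmin_inf (Delta_full (bvec_diff y x)) (regret_term_diff_le _ _ _).
Qed.

Lemma balanced_regret_nominal_opt_le0 (X : {set bvec n}) (Gamma : nat)
    (x : bvec n) :
  (forall y, y \in X -> nominal c d x <= nominal c d y) ->
  balanced_regret c d X Gamma n x <= 0.
Proof.
move=> x_opt; apply: bigmax_le => [|[dl y] /setXP [_ yX]].
  by rewrite inner_min_id.
by rewrite (le_trans (inner_min_le_nominal_diff _ _ _)) // subr_le0 x_opt.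
Qed.

End RegretTerm.

Theorem theorem1 (R : realFieldType) (n : nat) (X : {set bvec n})
    (c d : 'I_n -> R) (Gamma : nat) :
  (forall i, 0 <= c i) -> (forall i, 0 <= d i) -> (Gamma <= n)%N ->
  forall x : bvec n, x \in X ->
  (forall x' : bvec n, x' \in X -> nominal c d x <= nominal c d x') ->
  forall x' : bvec n, x' \in X ->
    balanced_regret c d X Gamma n x <= balanced_regret c d X Gamma n x'.
Proof.
move=> _ d_ge0 _ x _ x_opt x' _.
apply: (@le_trans _ _ 0); last exact: balanced_regret_ge0.
exact: balanced_regret_nominal_opt_le0.
Qed.
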